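(* Let $g,h,K$ be parameters and let $a,b,c,d$ be generators of an associative algebra over $\mathbb{C}$ (extended by the parameters) subject to the relations $$ca=ac-gc^2,\quad cb=bc-gdc-hac+ghc^2,\quad cd=dc-hc^2,\quad da=ad-gdc+hac,$$ $$db=bd+g(ad-bc+hac-d^2),\quad ba=ab-h(ad-bc+hac-a^2).$$ Let $T=\begin{pmatrix} a&b\\ c&d\end{pmatrix}$ and $$\hat R(K;g,h)=\begin{pmatrix}1&-hK&hK&ghK\\0&1-K&K&gK\\0&K&1-K&-gK\\0&0&0&1\end{pmatrix},\qquad R=P\hat R(K;g,h).$$ Then for every value of $K$, $$R\,T_1T_2=T_2T_1\,R .$$
   Context: All $4\times4$ matrices are written in the ordered basis $e_1\otimes e_1,\ e_1\otimes e_2,\ e_2\otimes e_1,\ e_2\otimes e_2$ of $\mathbb{C}^2\otimes\mathbb{C}^2$, with double indices $(ij)$ ordered $11,12,21,22$. $P$ is the permutation (flip) matrix, i.e. the $4\times4$ matrix that swaps the second and third basis vectors. $T_1=T\otimes I_2$ and $T_2=I_2\otimes T$, so $T_1T_2$ has entries $(T_1T_2)_{(ij),(kl)}=T_{ik}T_{jl}$ and $T_2T_1$ has entries $(T_2T_1)_{(ij),(kl)}=T_{jl}T_{ik}$ (the entries of $T$ do not commute, so the order of factors matters). The equality is an equality of $4\times 4$ matrices with entries in the algebra. *)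

From mathcomp Require Import all_boot all_algebra.
Set Implicit Arguments. Unset Strict Implicit. Unset Printing Implicit Defensive.
Import GRing.Theory.
Local Open Scope ring_scope.

(* Basis of C^2 (x) C^2 ordered e1e1, e1e2, e2e1, e2e2; the 4x4 index p
   corresponds to the double index (hi p, lo p) with p = 2*hi p + lo p
   (indices 0-based here). *)
Definition hi (p : 'I_4) : 'I_2 := inord (p %/ 2).
Definition lo (p : 'I_4) : 'I_2 := inord (p %% 2).

Definition T1T2 (A : ringType) (T : 'M[A]_2) : 'M[A]_4 :=
  \matrix_(p, q) (T (hi p) (hi q) * T (lo p) (lo q)).
Definition T2T1 (A : ringType) (T : 'M[A]_2) : 'M[A]_4 :=
  \matrix_(p, q) (T (lo p) (lo q) * T (hi p) (hi q)).

Definition Tmat (A : ringType) (a b c d : A) : 'M[A]_2 :=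
  \matrix_(i, j) (if (i : nat) == 0%N then (if (j : nat) == 0%N then a else b)
                  else (if (j : nat) == 0%N then c else d)).

Definition Pflip (A : ringType) : 'M[A]_4 :=
  \matrix_(p, q) (if (hi p == lo q) && (lo p == hi q) then 1 else 0).

Definition Rhat (A : ringType) (K g h : A) : 'M[A]_4 :=
  \matrix_(p, q)
   match (p : nat), (q : nat) with
   | 0, 0 => 1 | 0, 1 => - (h * K) | 0, 2 => h * K | 0, 3 => g * h * K
   | 1, 1 => 1 - K | 1, 2 => K | 1, 3 => g * K
   | 2, 1 => K | 2, 2 => 1 - K | 2, 3 => - (g * K)
   | 3, 3 => 1
   | _, _ => 0
   end.

Definition Rmat (A : ringType) (K g h : A) : 'M[A]_4 := Pflip A *m Rhat K g h.

Definition central (A : ringType) (x : A) : Prop := forall y : A, x * y = y * x.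

From mathcomp Require Import all_boot all_algebra.
Set Implicit Arguments. Unset Strict Implicit. Unset Printing Implicit Defensive.
Import GRing.Theory.
Local Open Scope ring_scope.

(* Write Rhat = 1 + K x w with the column x = (h, 1, -1, 0)^T and the row
   w = (0, -1, 1, g), deformations of e1 (x) e2 - e2 (x) e1.  The relations
   say precisely that x and w are right and left eigenvectors of T1 T2 for the
   same eigenvalue, the quantum determinant D = ad - bc + hac:
   T1 T2 x = x D and w T1 T2 = D w.  Hence x w, and with it Rhat (K being
   central), commutes with T1 T2; since P T1 T2 = T2 T1 P, multiplying by the
   flip P turns this into R T1 T2 = T2 T1 R. *)

Lemma central_scalar_mxC (A : ringType) n (k : A) (M : 'M[A]_n) :
  central k -> M *m k%:M = k%:M *m M.
Proof.
move=> ck; apply/matrixP => i j; rewrite mul_scalar_mx mxE.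
rewrite (bigD1 j) //= big1 => [|l /negbTE ne_lj]; last first.
  by rewrite mxE ne_lj mulr0n mulr0.
by rewrite !mxE eqxx mulr1n addr0 ck.
Qed.

Lemma comm_mx_outer (A : ringType) n
    (x : 'cV[A]_n) (w : 'rV[A]_n) (M : 'M[A]_n) (e : A) :
  w *m M = e%:M *m w -> M *m x = x *m e%:M -> comm_mx (x *m w) M.
Proof. by move=> wM Mx; rewrite /comm_mx -mulmxA wM mulmxA -Mx mulmxA. Qed.

Lemma comm_mx_1_add_scaled (A : ringType) n (X M : 'M[A]_n) (k : A) :
  central k -> comm_mx X M -> comm_mx (1%:M + X *m k%:M) M.
Proof.
move=> ck XM; rewrite /comm_mx mulmxDl mulmxDr mul1mx mulmx1 -!mulmxA.
by rewrite -(central_scalar_mxC _ ck) !mulmxA XM.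
Qed.

Lemma hiE (p : 'I_4) : hi p = (p %/ 2)%N :> nat.
Proof. by rewrite inordK //; case: p => [[|[|[|[|]]]]]. Qed.

Lemma loE (p : 'I_4) : lo p = (p %% 2)%N :> nat.
Proof. by rewrite inordK //; case: p => [[|[|[|[|]]]]]. Qed.

Lemma Pflip_T1T2 (A : ringType) (T : 'M[A]_2) :
  Pflip A *m T1T2 T = T2T1 T *m Pflip A.
Proof.
apply/matrixP => p q; rewrite !mxE !big_ord_recl !big_ord0 !mxE.
rewrite -!val_eqE /= !hiE !loE /hi /lo.
by case: p => [[|[|[|[|p]]]] ?] //; case: q => [[|[|[|[|q]]]] ?] //=;
  rewrite ?mul0r ?mulr0 ?mul1r ?mulr1 ?add0r ?addr0.
Qed.

Definition qdet (A : ringType) (h a b c d : A) : A := a * d - b * c + h * a * c.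

Definition wedge_col (A : ringType) (h : A) : 'cV[A]_4 :=
  \col_p (match p : nat with 0 => h | 1 => 1 | 2 => -1 | _ => 0 end).

Definition wedge_row (A : ringType) (g : A) : 'rV[A]_4 :=
  \row_q (match q : nat with 0 => 0 | 1 => -1 | 2 => 1 | _ => g end).

Lemma Rhat_wedge (A : ringType) (K g h : A) : central g ->
  Rhat K g h = 1%:M + wedge_col h *m wedge_row g *m K%:M.
Proof.
move=> cg; apply/matrixP => p q; rewrite !mxE !big_ord_recl !big_ord0 !mxE.
rewrite !big_ord_recl !big_ord0 !mxE -!val_eqE /=.
case: p => [[|[|[|[|p]]]] ?] //; case: q => [[|[|[|[|q]]]] ?] //=;
  rewrite ?mulr0n ?mulr1n ?mulr0 ?mul0r ?addr0 ?add0r ?mulr1 ?mul1r ?mulrN ?mulNr.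
all: by rewrite ?mul0r ?mulr1 ?mul1r ?opprK ?addr0 // cg.
Qed.

Section Eigen.
Variables (A : ringType) (g h a b c d : A).
Hypotheses (cg : central g) (ch : central h).
Hypotheses
  (r1 : c * a = a * c - g * c ^+ 2)
  (r2 : c * b = b * c - g * d * c - h * a * c + g * h * c ^+ 2)
  (r3 : c * d = d * c - h * c ^+ 2)
  (r4 : d * a = a * d - g * d * c + h * a * c)
  (r5 : d * b = b * d + g * (a * d - b * c + h * a * c - d ^+ 2))
  (r6 : b * a = a * b - h * (a * d - b * c + h * a * c - a ^+ 2)).

Lemma wedge_row_T1T2 :
  wedge_row g *m T1T2 (Tmat a b c d) = (qdet h a b c d)%:M *m wedge_row g.
Proof.
apply/matrixP => i q; rewrite ord1 mul_scalar_mx !mxE !big_ord_recl !big_ord0 !mxE.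
rewrite !hiE !loE /qdet /=.
case: q => [[|[|[|[|q]]]] ?] //=;
  rewrite ?mul0r ?mulr0 ?mul1r ?mulr1 ?add0r ?addr0 ?mulN1r -?expr2.
- by rewrite r1 subrK addNr.
- rewrite mulrN1 r2 r3 mulrBr !mulrA addrACA subrr addr0 addrAC subrK.
  by rewrite !opprD opprK addrA.
- by rewrite r4 -mulrA addrAC subrK addrA (addrC (- (b * c))).
- by rewrite r5 -addrA addKr mulrBr subrK cg.
Qed.

Lemma T1T2_wedge_col :
  T1T2 (Tmat a b c d) *m wedge_col h = wedge_col h *m (qdet h a b c d)%:M.
Proof.
apply/matrixP => p j; rewrite ord1 !mxE !big_ord_recl !big_ord0 !mxE.
rewrite !hiE !loE /qdet /=.
case: p => [[|[|[|[|p]]]] ?] //=;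
  rewrite ?mul0r ?mulr0 ?mul1r ?mulr1 ?add0r ?addr0 ?mulrN1 ?mulr1n ?mulN1r -?expr2.
- by rewrite r6 subKr -ch -mulrDr subrKC.
- by rewrite -ch mulrA addrC.
- rewrite r1 r2 r4 mulrBl -!ch !mulrA -cg.
  move: (h * a * c) (g * h * c * c) (b * c) (g * d * c) (a * d) => u v p q r.
  rewrite addrC addrACA (addrAC (p - q - u)) subrK addrACA subrr addr0.
  by rewrite opprD addrA opprB subrKA opprD opprB.
- by rewrite r3 addrAC subrr add0r -ch subrr.
Qed.
End Eigen.

Theorem mainTheorem2 (A : ringType) (g h K a b c d : A)
  (cg : central g) (ch : central h) (cK : central K)
  (r1 : c * a = a * c - g * c ^+ 2)
  (r2 : c * b = b * c - g * d * c - h * a * c + g * h * c ^+ 2)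
  (r3 : c * d = d * c - h * c ^+ 2)
  (r4 : d * a = a * d - g * d * c + h * a * c)
  (r5 : d * b = b * d + g * (a * d - b * c + h * a * c - d ^+ 2))
  (r6 : b * a = a * b - h * (a * d - b * c + h * a * c - a ^+ 2)) :
  Rmat K g h *m T1T2 (Tmat a b c d) = T2T1 (Tmat a b c d) *m Rmat K g h.
Proof.
have wedgeC : comm_mx (wedge_col h *m wedge_row g) (T1T2 (Tmat a b c d)).
  exact: comm_mx_outer (wedge_row_T1T2 cg r1 r2 r3 r4 r5)
                       (T1T2_wedge_col cg ch r1 r2 r3 r4 r6).
have RhatC := comm_mx_1_add_scaled cK wedgeC.
by rewrite /Rmat -mulmxA Rhat_wedge // RhatC mulmxA Pflip_T1T2 -mulmxA.
Qed.
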